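(* Let $G$ be an infinite locally finite connected graph and $(F_i)_{i=1}^\infty$ a sequence of finite connected subgraphs of $G$ such that, for all $i\ge1$, $F_i\le F_{i+1}$ and $N_G(F_i)\subseteq V(F_{i+1})$. Set $F=\bigcup_{i=1}^\infty F_i$. Suppose that for every $i\ge1$ and every component $H$ of $G-V(F_{i+1})$ there is a component $D$ of $F_{i+1}-V(F_i)$ with $N_G(H)\subseteq V(D)$. Then $F$ is a spanning subgraph of $G$ that is faithful to $G$.
   Context: For $X\subseteq V(G)$, $N_G(X)=\bigcup_{v\in X}N_G(v)\setminus X$; for a subgraph $H$, $N_G(H)=N_G(V(H))$. A ray is a one-way infinite path; two rays of a graph $H$ are equivalent in $H$ if for every finite $S\subseteq V(H)$ some component of $H-S$ contains tails of both; the classes are the ends of $H$. A subgraph $F$ of $G$ is faithful to $G$ if (i) every end of $G$ contains a ray of $F$, and (ii) any two rays of $F$ are equivalent in $F$ if and only if they are equivalent in $G$. *)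

From Stdlib Require Import List Arith.
Set Implicit Arguments.

Section Graphs.
Variable V : Type.

Definition simple_graph (adj : V -> V -> Prop) : Prop :=
  (forall x y, adj x y -> adj y x) /\ (forall x, ~ adj x x).

Definition finite_set (X : V -> Prop) : Prop :=
  exists l : list V, forall x, X x -> In x l.

Definition infinite_graph : Prop := ~ finite_set (fun _ => True).

Definition locally_finite (adj : V -> V -> Prop) : Prop :=
  forall v, finite_set (fun w => adj v w).

Record subgraph := Subgraph { sv : V -> Prop; se : V -> V -> Prop }.

Definition whole (adj : V -> V -> Prop) : subgraph := Subgraph (fun _ => True) adj.

Definition is_subgraph (adj : V -> V -> Prop) (H : subgraph) : Prop :=
  (forall x y, se H x y -> se H y x) /\
  (forall x y, se H x y -> adj x y /\ sv H x /\ sv H y).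

Definition sub_le (H K : subgraph) : Prop :=
  (forall x, sv H x -> sv K x) /\ (forall x y, se H x y -> se K x y).

Inductive reach (H : subgraph) : V -> V -> Prop :=
| reach0 x : sv H x -> reach H x x
| reachS x y z : se H x y -> reach H y z -> reach H x z.

Definition connected (H : subgraph) : Prop :=
  (exists v, sv H v) /\ (forall x y, sv H x -> sv H y -> reach H x y).

Definition finite_subgraph (H : subgraph) : Prop := finite_set (sv H).

Definition delete (H : subgraph) (X : V -> Prop) : subgraph :=
  Subgraph (fun x => sv H x /\ ~ X x) (fun x y => se H x y /\ ~ X x /\ ~ X y).

Definition is_component (H : subgraph) (C : V -> Prop) : Prop :=
  exists x, sv H x /\ forall y, C y <-> reach H x y.

Definition nbhd (adj : V -> V -> Prop) (X : V -> Prop) : V -> Prop :=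
  fun y => ~ X y /\ exists x, X x /\ adj x y.

Definition subset (X Y : V -> Prop) : Prop := forall x, X x -> Y x.

Definition union_seq (F : nat -> subgraph) : subgraph :=
  Subgraph (fun x => exists i, sv (F i) x) (fun x y => exists i, se (F i) x y).

Definition is_ray (H : subgraph) (r : nat -> V) : Prop :=
  (forall m n, r m = r n -> m = n) /\ (forall n, se H (r n) (r (S n))).

Definition ray_equiv (H : subgraph) (r1 r2 : nat -> V) : Prop :=
  forall S : V -> Prop, finite_set S -> subset S (sv H) ->
    exists C, is_component (delete H S) C /\
      exists k, forall n, k <= n -> C (r1 n) /\ C (r2 n).

Definition spanning (adj : V -> V -> Prop) (F : subgraph) : Prop :=
  is_subgraph adj F /\ forall v, sv F v.

(* F faithful to G: (i) every end of G contains a ray of F, i.e. every ray of G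
   is G-equivalent to some ray of F; (ii) rays of F are equivalent in F iff in G. *)
Definition faithful (adj : V -> V -> Prop) (F : subgraph) : Prop :=
  is_subgraph adj F /\
  (forall r, is_ray (whole adj) r ->
     exists r', is_ray F r' /\ ray_equiv (whole adj) r r') /\
  (forall r1 r2, is_ray F r1 -> is_ray F r2 ->
     (ray_equiv F r1 r2 <-> ray_equiv (whole adj) r1 r2)).

End Graphs.

(* Following a path of G from F_0, every exit from F_i lands in N(F_i), which
   lies in F_(i+1); so F spans G.  The heart of the argument is that for a
   component C of G - F_(i+1) whose neighbourhood lies in a component D of
   F_(i+1) - F_i, the set C u D is connected in F: a vertex of C lies in some
   F_j, and a path of the connected F_j from it to F_(i+1) leaves C through
   N(C), inside D.  As C u D avoids F_i, rays of F that are equivalent in G stay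
   equivalent in F.  An end of G is a nested sequence of components C_i of
   G - F_i; chaining the connected sets C_(i+1) u D_i, which lie in C_i, gives a
   walk in F that eventually stays in every C_i, and deleting its detours leaves
   a ray of F in that end. *)

From Stdlib Require Import List Arith Lia Classical IndefiniteDescription.

Set Implicit Arguments.
Unset Strict Implicit.

Section Reachability.
Variable V : Type.
Implicit Types (H K : subgraph V) (E : V -> V -> Prop) (X Y P Q C : V -> Prop).

Definition restrict H P : subgraph V :=
  Subgraph (fun x => sv H x /\ P x) (fun x y => se H x y /\ P x /\ P y).

Lemma reach_sv_r H x y : reach H x y -> sv H y.
Proof. induction 1; auto. Qed.

Lemma reach_sv_l E H x y : is_subgraph E H -> reach H x y -> sv H x.
Proof. intros [_ HE]. destruct 1 as [x hx|x y z hxy _]; auto. apply (HE _ _ hxy). Qed.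

Lemma reach_trans H x y z : reach H x y -> reach H y z -> reach H x z.
Proof. induction 1; intros; auto. econstructor; eauto. Qed.

Lemma reach_edge E H x y : is_subgraph E H -> se H x y -> reach H x y.
Proof. intros [_ HE] hxy. apply reachS with y; auto. constructor. apply (HE _ _ hxy). Qed.

Lemma reach_sym E H x y : is_subgraph E H -> reach H x y -> reach H y x.
Proof.
  intros HH. induction 1 as [x hx|x y z hxy _ IH]; [now constructor|].
  apply reach_trans with y; auto. apply reach_edge with E; auto. apply (proj1 HH); auto.
Qed.

Lemma reach_mono H K x y : sub_le H K -> reach H x y -> reach K x y.
Proof. intros [hv he]. induction 1; [constructor|econstructor]; eauto. Qed.

Lemma sub_le_trans H1 H2 H3 : sub_le H1 H2 -> sub_le H2 H3 -> sub_le H1 H3.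
Proof. unfold sub_le; firstorder. Qed.

Lemma sub_le_delete H K X : sub_le H K -> sub_le (delete H X) (delete K X).
Proof. unfold sub_le; simpl; firstorder. Qed.

Lemma sub_le_delete_anti H X Y : subset X Y -> sub_le (delete H Y) (delete H X).
Proof. unfold sub_le, subset; simpl; firstorder. Qed.

Lemma sub_le_restrict H K P Q : sub_le H K -> subset P Q -> sub_le (restrict H P) (restrict K Q).
Proof. unfold sub_le, subset; simpl; firstorder. Qed.

Lemma sub_le_restrict_delete H P X :
  (forall x, P x -> ~ X x) -> sub_le (restrict H P) (delete H X).
Proof. unfold sub_le; simpl; firstorder. Qed.

Lemma is_subgraph_delete E H X : is_subgraph E H -> is_subgraph E (delete H X).
Proof. unfold is_subgraph; simpl; firstorder. Qed.

Lemma is_subgraph_restrict E H P : is_subgraph E H -> is_subgraph E (restrict H P).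
Proof. unfold is_subgraph; simpl; firstorder. Qed.

Lemma first_exit E H P x z : is_subgraph E H -> reach H x z -> P x -> ~ P z ->
  exists a b, reach (restrict H P) x a /\ se H a b /\ P a /\ ~ P b.
Proof.
  intros HH hxz. assert (hx := reach_sv_l HH hxz).
  induction hxz as [x _|x y z hxy hyz IH]; intros hPx hPz; [contradiction|].
  destruct (classic (P y)) as [hPy|hPy].
  - destruct (IH (reach_sv_l HH hyz) hPy hPz) as (a & b & hya & hab & hPa & hPb).
    exists a, b. split; auto. apply reachS with y; simpl; auto.
  - exists x, y. repeat split; auto. constructor. simpl; auto.
Qed.

Lemma component_of H x : sv H x -> is_component H (reach H x).
Proof. intro hx. exists x. split; auto. tauto. Qed.

Lemma component_nonempty H C : is_component H C -> exists x, C x.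
Proof. intros (x & hx & hC). exists x. apply hC. now constructor. Qed.

Lemma component_sv H C x : is_component H C -> C x -> sv H x.
Proof. intros (x0 & _ & hC) hx. apply hC in hx. exact (reach_sv_r hx). Qed.

Lemma component_closed H C x y : is_component H C -> C x -> reach H x y -> C y.
Proof. intros (x0 & _ & hC) hx hxy. apply hC. apply reach_trans with x; auto. now apply hC. Qed.

Lemma component_reach E H C x y :
  is_subgraph E H -> is_component H C -> C x -> C y -> reach H x y.
Proof.
  intros HH (x0 & _ & hC) hx hy. apply hC in hx, hy.
  apply reach_trans with x0; auto. apply reach_sym with E; auto.
Qed.

Lemma component_reach_restrict E H C x y :
  is_subgraph E H -> is_component H C -> C x -> C y -> reach (restrict H C) x y.
Proof.
  intros HH hC hx hy. assert (hxy : reach H x y) by (eapply component_reach; eauto). clear hy.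
  induction hxy as [x|x y z hxy hyz IH]; [constructor; simpl; auto|].
  assert (hy : C y) by (apply component_closed with H x; auto; apply reach_edge with E; auto).
  apply reachS with y; simpl; auto.
Qed.

Lemma component_extend H K C :
  sub_le H K -> is_component H C -> exists C', is_component K C' /\ subset C C'.
Proof.
  intros hHK (x0 & hx0 & hC). exists (reach K x0). split.
  - apply component_of. apply (proj1 hHK); auto.
  - intros y hy. apply reach_mono with H; auto. now apply hC.
Qed.

Lemma component_sub E H K C C' x :
  is_subgraph E H -> sub_le H K -> is_component H C -> is_component K C' ->
  C x -> C' x -> subset C C'.
Proof.
  intros HH hHK hC hC' hx hx' y hy. apply component_closed with K x; auto.
  apply reach_mono with H; auto. apply component_reach with E C; auto.
Qed.

Inductive walk H : nat -> V -> V -> Prop :=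
| walk0 x : sv H x -> walk H 0 x x
| walkS n x y z : se H x y -> walk H n y z -> walk H (S n) x z.

Lemma reach_walk H x y : reach H x y -> exists n, walk H n x y.
Proof.
  induction 1 as [x hx|x y z hxy _ [n hn]]; [exists 0|exists (S n)]; econstructor; eauto.
Qed.

Lemma reach_chain E H (s : nat -> V) N :
  is_subgraph E H -> (forall n, N <= n -> se H (s n) (s (S n))) ->
  forall M, N <= M -> reach H (s N) (s M).
Proof.
  intros HH hs M hM. induction hM as [|M hM IH].
  - constructor. apply (proj2 HH _ _ (hs N (le_n N))).
  - apply reach_trans with (s M); auto. apply reach_edge with E; auto.
Qed.

End Reachability.

Section Sequences.
Variable V : Type.

Lemma injective_leaves_finite (r : nat -> V) (X : V -> Prop) :
  (forall m n, r m = r n -> m = n) -> finite_set X ->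
  exists N, forall n, N <= n -> ~ X (r n).
Proof.
  intros hinj [l hl].
  enough (exists N, forall n, N <= n -> ~ In (r n) l) as [N hN]
    by (exists N; intros n hn hX; apply (hN n hn), hl, hX).
  clear hl. induction l as [|a l [N hN]]; [exists 0; simpl; tauto|].
  destruct (classic (exists k, r k = a)) as [[k <-]|ha].
  - exists (max N (S k)). intros n hn [e|e]; [apply hinj in e; lia|apply (hN n); auto; lia].
  - exists N. intros n hn [e|e]; [apply ha; eauto|apply (hN n); auto].
Qed.

Lemma last_visit (w : nat -> V) k :
  (exists N, forall m, N <= m -> w m <> w k) ->
  exists L, k <= L /\ w L = w k /\ forall m, L < m -> w m <> w k.
Proof.
  intros [N hN]. induction N as [|N IH].
  - exfalso. apply (hN k); auto; lia.
  - destruct (classic (w N = w k)) as [e|e].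
    + destruct (le_lt_dec k N) as [hk|hk].
      * exists N. repeat split; auto.
      * exfalso. apply (hN k); auto; lia.
    + apply IH. intros m hm. destruct (Nat.eq_dec m N) as [->|]; auto. apply hN; lia.
Qed.

(* Jumping to the last visit of the next vertex removes every detour of the walk. *)
Lemma walk_contains_ray (H : subgraph V) (w : nat -> V) :
  (forall m, w (S m) = w m \/ se H (w m) (w (S m))) ->
  (forall v, exists N, forall m, N <= m -> w m <> v) ->
  exists f : nat -> nat, (forall n, n <= f n) /\ is_ray H (fun n => w (f n)).
Proof.
  intros hstep hfin.
  destruct (functional_choice (fun k L => k <= L /\ w L = w k /\ forall m, L < m -> w m <> w k))
    as [last hlast].
  { intro k. apply last_visit, hfin. }
  set (f := fun n => Nat.iter n (fun a => last (S a)) (last 0)).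
  assert (fS : forall n, f (S n) = last (S (f n))) by reflexivity.
  assert (hf : forall n m, f n < m -> w m <> w (f n)).
  { intros n m hm. assert (exists k, f n = last k) as [k hk].
    { destruct n; [exists 0|exists (S (f n))]; reflexivity. }
    rewrite hk in *. destruct (hlast k) as (_ & -> & h). auto. }
  assert (hinc : forall m n, m < n -> f m < f n).
  { intros m n h. induction h as [|n h IH]; rewrite fS.
    - destruct (hlast (S (f m))); lia.
    - destruct (hlast (S (f n))); lia. }
  exists f. split; [|split].
  - induction n as [|n IH]; [lia|]. specialize (hinc n (S n)); lia.
  - intros m n e. destruct (lt_eq_lt_dec m n) as [[h|h]|h]; auto; exfalso.
    + apply (hf m (f n)); auto.
    + apply (hf n (f m)); auto.
  - intro n. rewrite (fS n). destruct (hlast (S (f n))) as (_ & -> & _).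
    destruct (hstep (f n)) as [e|e]; auto. exfalso. apply (hf n (S (f n))); auto.
Qed.

End Sequences.

Section Concatenation.
Variables (V : Type) (H : subgraph V) (P : nat -> V -> Prop) (d : nat -> V).
Hypothesis Hlink : forall i, reach (restrict H (P i)) (d i) (d (S i)).

Record walk_state := WalkState { ws_vertex : V; ws_stage : nat; ws_left : nat }.

Definition on_track (s : walk_state) : Prop :=
  walk (restrict H (P (ws_stage s))) (ws_left s) (ws_vertex s) (d (S (ws_stage s))).

Definition advances (s s' : walk_state) : Prop :=
  (ws_vertex s' = ws_vertex s \/ se H (ws_vertex s) (ws_vertex s')) /\
  (ws_stage s' = ws_stage s /\ ws_left s' < ws_left s \/ ws_stage s' = S (ws_stage s)).

Lemma on_track_start : exists s, on_track s /\ ws_stage s = 0.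
Proof.
  destruct (reach_walk (Hlink 0)) as [n hn]. now exists (WalkState (d 0) 0 n).
Qed.

Lemma on_track_advance s : on_track s -> exists s', on_track s' /\ advances s s'.
Proof.
  destruct s as [v i [|n]]; unfold on_track, advances; simpl; intro hw; inversion hw; subst.
  - destruct (reach_walk (Hlink (S i))) as [n hn].
    exists (WalkState (d (S i)) (S i) n); simpl. auto.
  - exists (WalkState y i n); simpl. destruct H1 as [hvy _]. split; [|split]; auto.
Qed.

Lemma on_track_in_stage s : on_track s -> P (ws_stage s) (ws_vertex s).
Proof. unfold on_track. destruct 1 as [x [_ hx]|n x y z [_ [hx _]] _]; auto. Qed.

Lemma advances_stage_unbounded (s : nat -> walk_state) :
  (forall m, advances (s m) (s (S m))) ->
  forall i, exists M, forall m, M <= m -> i <= ws_stage (s m).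
Proof.
  intros hs.
  assert (hmono : forall m m', m <= m' -> ws_stage (s m) <= ws_stage (s m')).
  { induction 1 as [|m' _ IH]; auto. destruct (hs m') as [_ [[e _]|e]]; lia. }
  assert (hnext : forall k m, ws_left (s m) <= k ->
                   exists m', S (ws_stage (s m)) <= ws_stage (s m')).
  { induction k as [|k IH]; intros m hm; destruct (hs m) as [_ [[e e']|e]].
    - lia.
    - exists (S m); lia.
    - destruct (IH (S m)) as [m' hm']; [lia|]. exists m'; lia.
    - exists (S m); lia. }
  induction i as [|i [M hM]]; [exists 0; lia|].
  destruct (hnext _ M (le_n _)) as [M' hM']. exists M'. intros m hm.
  specialize (hM M (le_n M)). specialize (hmono _ _ hm). lia.
Qed.

Lemma walk_concat : exists (w : nat -> V) (g : nat -> nat),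
  (forall m, w (S m) = w m \/ se H (w m) (w (S m))) /\
  (forall m, P (g m) (w m)) /\
  (forall i, exists M, forall m, M <= m -> i <= g m).
Proof.
  destruct (functional_choice (fun s s' => on_track s -> on_track s' /\ advances s s'))
    as [next hnext].
  { intro s. destruct (classic (on_track s)) as [h|h].
    - destruct (on_track_advance h) as [s' hs']. eauto.
    - exists s. tauto. }
  destruct on_track_start as [s0 [hs0 _]].
  set (s := fun m => Nat.iter m next s0).
  assert (htrack : forall m, on_track (s m)).
  { induction m as [|m IH]; [exact hs0|]. apply (hnext (s m) IH). }
  exists (fun m => ws_vertex (s m)), (fun m => ws_stage (s m)). split; [|split].
  - intro m. apply (hnext (s m) (htrack m)).
  - intro m. apply on_track_in_stage, htrack.
  - apply advances_stage_unbounded. intro m. apply (hnext (s m) (htrack m)).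
Qed.

End Concatenation.

Section Exhaustion.
Variables (V : Type) (adj : V -> V -> Prop) (F : nat -> subgraph V).
Hypothesis Hsimple : simple_graph adj.
Hypothesis Hconn : connected (whole adj).
Hypothesis HFsub : forall i, is_subgraph adj (F i).
Hypothesis HFfin : forall i, finite_subgraph (F i).
Hypothesis HFconn : forall i, connected (F i).
Hypothesis Hmono : forall i, sub_le (F i) (F (S i)).
Hypothesis Hnbhd : forall i, subset (nbhd adj (sv (F i))) (sv (F (S i))).
Hypothesis Hcomp : forall i (H : V -> Prop),
  is_component (delete (whole adj) (sv (F (S i)))) H ->
  exists D, is_component (delete (F (S i)) (sv (F i))) D /\ subset (nbhd adj H) D.

Local Notation UF := (union_seq F).
Local Notation outside i := (delete (whole adj) (sv (F i))).
Local Notation layer i := (delete (F (S i)) (sv (F i))).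

Lemma F_le i j : i <= j -> subset (sv (F i)) (sv (F j)).
Proof. induction 1 as [|j _ IH]; intros x hx; auto. apply (proj1 (Hmono j)), IH, hx. Qed.

Lemma F_cover v : exists i, sv (F i) v.
Proof.
  destruct (HFconn 0) as [[x0 hx0] _].
  assert (hr := proj2 Hconn x0 v I I). revert hx0. generalize 0.
  induction hr as [x _|x y z hxy _ IH]; intros i hx; eauto.
  destruct (classic (sv (F i) y)) as [hy|hy]; eauto.
  apply (IH (S i)), Hnbhd. split; eauto.
Qed.

Lemma finite_in_F X : finite_set X -> exists j, subset X (sv (F j)).
Proof.
  intros [l hl].
  enough (exists j, forall x, In x l -> sv (F j) x) as [j hj]
    by (exists j; intros x hx; apply hj, hl, hx).
  clear hl. induction l as [|a l [j hj]]; [exists 0; simpl; tauto|].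
  destruct (F_cover a) as [k hk]. exists (max j k).
  intros x [<-|hx]; [apply F_le with k|apply F_le with j]; auto; lia.
Qed.

Lemma F_sub_union i : sub_le (F i) UF.
Proof. split; simpl; eauto. Qed.

Lemma union_is_subgraph : is_subgraph adj UF.
Proof.
  split; simpl; intros x y [i h].
  - exists i. apply (proj1 (HFsub i)), h.
  - destruct (proj2 (HFsub i) _ _ h) as (? & ? & ?). split; eauto.
Qed.

Lemma whole_is_subgraph : is_subgraph adj (whole adj).
Proof. split; simpl; auto. apply Hsimple. Qed.

Lemma sub_le_whole H : is_subgraph adj H -> sub_le H (whole adj).
Proof. intros [_ h]. split; simpl; auto. intros x y hxy. apply (h _ _ hxy). Qed.

Lemma outside_avoids i C x : is_component (outside i) C -> C x -> ~ sv (F i) x.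
Proof. intros hC hx. apply (component_sv hC hx). Qed.

Lemma layer_avoids i D x : is_component (layer i) D -> D x -> sv (F (S i)) x /\ ~ sv (F i) x.
Proof. intros hD hx. apply (component_sv hD hx). Qed.

Section Block.
Variables (i : nat) (C D : V -> Prop).
Hypothesis HC : is_component (outside (S i)) C.
Hypothesis HCD : subset (nbhd adj C) D.

(* A path of a large [F j] from [x] into [F (S i)] must leave [C] through
   [N(C)], which lies in [D]. *)
Lemma component_reaches_nbhd x : C x ->
  exists d, D d /\ reach (restrict UF (fun v => C v \/ D v)) x d.
Proof.
  intro hx. destruct (F_cover x) as [j hj]. destruct (HFconn (S i)) as [[z hz] _].
  destruct (le_lt_dec j (S i)) as [l|l].
  { exfalso. apply (outside_avoids HC hx). apply F_le with j; auto. }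
  assert (hzj : sv (F j) z) by (apply F_le with (S i); auto; lia).
  destruct (first_exit (P := C) (HFsub j) (proj2 (HFconn j) x z hj hzj) hx)
    as (a & b & hxa & hab & ha & hb).
  { intro hCz. apply (outside_avoids HC hCz hz). }
  destruct (proj2 (HFsub j) _ _ hab) as (hadj & _ & hbj).
  assert (hDb : D b) by (apply HCD; split; eauto).
  exists b. split; auto. apply reach_trans with a.
  - apply reach_mono with (restrict (F j) C); auto.
    apply sub_le_restrict; [apply F_sub_union|intros v hv; auto].
  - apply reach_edge with adj; [apply is_subgraph_restrict, union_is_subgraph|].
    simpl. split; eauto.
Qed.

Hypothesis HD : is_component (layer i) D.

Lemma block_connected x y : C x \/ D x -> C y \/ D y ->
  reach (restrict UF (fun v => C v \/ D v)) x y.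
Proof.
  set (B := fun v => C v \/ D v).
  assert (hsub : is_subgraph adj (restrict UF B))
    by apply is_subgraph_restrict, union_is_subgraph.
  assert (hDD : forall a b, D a -> D b -> reach (restrict UF B) a b).
  { intros a b ha hb. apply reach_mono with (restrict (layer i) D).
    - apply sub_le_restrict; [|intros v hv; right; auto].
      apply sub_le_trans with (F (S i)); [split; simpl; tauto|apply F_sub_union].
    - apply component_reach_restrict with adj; auto.
      apply is_subgraph_delete, HFsub. }
  assert (hreachD : forall v, B v -> exists d, D d /\ reach (restrict UF B) v d).
  { intros v [hv|hv]; [apply component_reaches_nbhd; auto|exists v; auto]. }
  intros hx hy.
  destruct (hreachD x hx) as (d1 & hd1 & h1). destruct (hreachD y hy) as (d2 & hd2 & h2).
  apply reach_trans with d1; auto. apply reach_trans with d2; auto. apply reach_sym with adj; auto.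
Qed.

Lemma block_avoids x : C x \/ D x -> ~ sv (F i) x.
Proof.
  intros [hx|hx] h; [apply (outside_avoids HC hx)|apply (layer_avoids HD hx)]; auto.
  apply (proj1 (Hmono i)), h.
Qed.

Lemma layer_in_outer_component C' x :
  is_component (outside i) C' -> C x -> C' x -> subset D C'.
Proof.
  intros hC' hx hx'. destruct (HFconn (S i)) as [[z hz] _].
  destruct (first_exit (P := C) whole_is_subgraph (proj2 Hconn x z I I) hx)
    as (a & b & _ & hab & ha & hb).
  { intro hCz. apply (outside_avoids HC hCz hz). }
  assert (hCC' : subset C C').
  { apply component_sub with adj (outside (S i)) (outside i) x; auto.
    - apply is_subgraph_delete, whole_is_subgraph.
    - apply sub_le_delete_anti, F_le; auto. }
  assert (hDb : D b) by (apply HCD; split; eauto).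
  assert (hC'b : C' b).
  { apply component_closed with (outside i) a; auto.
    apply reach_edge with adj; [apply is_subgraph_delete, whole_is_subgraph|].
    simpl. split; auto. split; [apply block_avoids; auto|apply (layer_avoids HD hDb)]. }
  intros y hy. apply component_closed with (outside i) b; auto.
  apply reach_mono with (layer i).
  - apply sub_le_delete, sub_le_whole, HFsub.
  - apply component_reach with adj D; auto. apply is_subgraph_delete, HFsub.
Qed.

End Block.

Lemma union_equiv_whole r1 r2 : ray_equiv UF r1 r2 -> ray_equiv (whole adj) r1 r2.
Proof.
  intros h X hX _. destruct (h X hX) as (C & hC & hk); [intros x _; apply F_cover|].
  assert (hle : sub_le (delete UF X) (delete (whole adj) X))
    by apply sub_le_delete, sub_le_whole, union_is_subgraph.
  destruct (component_extend hle hC)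
    as (C' & hC' & hCC').
  exists C'. split; auto. destruct hk as [k hk]. exists k. intros n hn.
  destruct (hk n hn). auto.
Qed.

Lemma whole_equiv_union r1 r2 : ray_equiv (whole adj) r1 r2 -> ray_equiv UF r1 r2.
Proof.
  intros h X hX _. destruct (finite_in_F hX) as [j hj].
  destruct (h (sv (F (S j))) (HFfin (S j))) as (C & hC & k & hk); [intros x _; exact I|].
  destruct (Hcomp hC) as (D & hD & hCD).
  destruct (hk k (le_n k)) as [hk1 _].
  set (B := fun v => C v \/ D v).
  assert (hB : subset B (reach (delete UF X) (r1 k))).
  { intros y hy. apply reach_mono with (restrict UF B).
    - apply sub_le_restrict_delete. intros v hv hXv. apply (block_avoids hC hD hv), hj, hXv.
    - apply (block_connected hC hCD hD); auto. }
  exists (reach (delete UF X) (r1 k)). split.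
  - apply component_of. apply reach_sv_r with (r1 k), hB. left; auto.
  - exists k. intros n hn. destruct (hk n hn). split; apply hB; left; auto.
Qed.

Section NestedComponents.
Variable C : nat -> V -> Prop.
Hypothesis HC : forall i, is_component (outside i) (C i).
Hypothesis HCnest : forall i, subset (C (S i)) (C i).

Lemma C_le i j : i <= j -> subset (C j) (C i).
Proof. induction 1 as [|j _ IH]; intros x hx; auto. apply IH, HCnest, hx. Qed.

Lemma nested_components_walk : exists w : nat -> V,
  (forall m, w (S m) = w m \/ se UF (w m) (w (S m))) /\
  (forall j, exists M, forall m, M <= m -> C j (w m)).
Proof.
  destruct (functional_choice
              (fun i D => is_component (layer i) D /\ subset (nbhd adj (C (S i))) D))
    as [D hD].
  { intro i. apply Hcomp, HC. }
  destruct (functional_choice (fun i d => D i d)) as [d hd].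
  { intro i. apply component_nonempty with (layer i), hD. }
  assert (hDC : forall i, subset (D i) (C i)).
  { intro i. destruct (component_nonempty (HC (S i))) as [x hx].
    apply (layer_in_outer_component (HC (S i)) (proj2 (hD i)) (proj1 (hD i)) (HC i) hx).
    apply HCnest, hx. }
  destruct (walk_concat (H := UF) (P := fun i v => C (S i) v \/ D i v) (d := d))
    as (w & g & hw & hwg & hg).
  { intro i. apply (block_connected (HC (S i)) (proj2 (hD i)) (proj1 (hD i))); auto.
    left. apply hDC, hd. }
  exists w. split; auto.
  intro j. destruct (hg j) as [M hM]. exists M. intros m hm.
  apply C_le with (g m); auto. destruct (hwg m) as [h|h]; [apply HCnest, h|apply hDC, h].
Qed.

Lemma nested_components_ray : exists r, is_ray UF r /\
  forall j, exists M, forall n, M <= n -> C j (r n).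
Proof.
  destruct nested_components_walk as (w & hw & hwC).
  destruct (walk_contains_ray (w := w) hw) as (f & hf & hray).
  { intro v. destruct (F_cover v) as [j hj]. destruct (hwC j) as [M hM].
    exists M. intros m hm <-. apply (outside_avoids (HC j) (hM m hm) hj). }
  exists (fun n => w (f n)). split; auto.
  intro j. destruct (hwC j) as [M hM]. exists M. intros n hn. apply hM.
  specialize (hf n). lia.
Qed.

End NestedComponents.

Lemma ray_equiv_union_ray r : is_ray (whole adj) r ->
  exists r', is_ray UF r' /\ ray_equiv (whole adj) r r'.
Proof.
  intros [hinj hr].
  destruct (functional_choice (fun i N => forall n, N <= n -> ~ sv (F i) (r n))) as [N hN].
  { intro i. apply injective_leaves_finite, HFfin; auto. }
  set (C := fun i => reach (outside i) (r (N i))).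
  assert (hC : forall i, is_component (outside i) (C i)).
  { intro i. apply component_of. split; [exact I|apply hN; auto]. }
  assert (htail : forall i n, N i <= n -> C i (r n)).
  { intros i n hn. apply reach_chain with adj; auto.
    - apply is_subgraph_delete, whole_is_subgraph.
    - intros m hm. split; [apply hr|split; apply hN; lia]. }
  assert (hnest : forall i, subset (C (S i)) (C i)).
  { intro i. set (n := max (N i) (N (S i))).
    apply component_sub with adj (outside (S i)) (outside i) (r n); auto; try (apply htail; lia).
    - apply is_subgraph_delete, whole_is_subgraph.
    - apply sub_le_delete_anti, F_le; auto. }
  destruct (nested_components_ray hC hnest) as (r' & hr' & hr'C).
  exists r'. split; auto. intros X hX _. destruct (finite_in_F hX) as [j hj].
  destruct (component_extend (sub_le_delete_anti (whole adj) hj) (hC j)) as (C' & hC' & hCC').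
  exists C'. split; auto. destruct (hr'C j) as [M hM]. exists (max M (N j)).
  intros n hn. split; apply hCC'; [apply htail|apply hM]; lia.
Qed.

End Exhaustion.

Theorem lemma12 (V : Type) (adj : V -> V -> Prop) (F : nat -> subgraph V)
  (Hsimple : simple_graph adj)
  (Hinf : infinite_graph V)
  (Hlf : locally_finite adj)
  (Hconn : connected (whole adj))
  (HFsub : forall i, is_subgraph adj (F i))
  (HFfin : forall i, finite_subgraph (F i))
  (HFconn : forall i, connected (F i))
  (Hmono : forall i, sub_le (F i) (F (S i)))
  (Hnbhd : forall i, subset (nbhd adj (sv (F i))) (sv (F (S i))))
  (Hcomp : forall i (H : V -> Prop),
      is_component (delete (whole adj) (sv (F (S i)))) H ->
      exists D, is_component (delete (F (S i)) (sv (F i))) D /\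
                subset (nbhd adj H) D) :
  spanning adj (union_seq F) /\ faithful adj (union_seq F).
Proof.
  assert (Hsub := union_is_subgraph HFsub).
  split; [split|split; [|split]]; auto.
  - intro v. exact (F_cover Hconn HFconn Hnbhd v).
  - intros r Hr. eapply ray_equiv_union_ray; eauto.
  - intros r1 r2 _ _. split.
    + eapply union_equiv_whole; eauto.
    + eapply whole_equiv_union; eauto.
Qed.
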